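(* Let $z_1,\dots,z_N\in\mathbb{C}$ (not necessarily distinct) and let $x_i\in\mathbb{S}^2$ with $\pi_{\mathbb{S}^2}(x_i)=z_i$, $1\le i\le N$. Then $$\frac{\prod_{i=1}^N\|x-z_i\|}{\big\|\prod_{i=1}^N(x-z_i)\big\|}=\frac{2^N}{\sqrt{N+1}}\Big(\int_{\mathbb{S}^2}\prod_{i=1}^N|p-x_i|^2\,d\sigma(p)\Big)^{-1/2},$$ where $\|\cdot\|$ is the Bombieri–Weyl norm and $\sigma$ is the normalized surface measure on $\mathbb{S}^2$.
   Context: $\mathbb{S}^2$ is the unit sphere in $\mathbb{R}^3$, $\sigma$ its surface measure with $\sigma(\mathbb{S}^2)=1$, and $\pi_{\mathbb{S}^2}(a,b,c)=\frac{a+ib}{1-c}$ the stereographic projection from the North pole. The Bombieri–Weyl norm of $P(z)=\sum_{i=0}^N a_iz^i$ of degree $N$ is $\|P\|=(\sum_{i=0}^N\binom{N}{i}^{-1}|a_i|^2)^{1/2}$. *)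

From Stdlib Require Import Reals Lra ClassicalEpsilon.
Open Scope R_scope.

Definition Cx : Type := (R * R)%type.
Definition Cx0 : Cx := (0, 0).
Definition Cx1 : Cx := (1, 0).
Definition Cxadd (u v : Cx) : Cx := (fst u + fst v, snd u + snd v).
Definition Cxopp (u : Cx) : Cx := (- fst u, - snd u).
Definition Cxsub (u v : Cx) : Cx := Cxadd u (Cxopp v).
Definition Cxmul (u v : Cx) : Cx :=
  (fst u * fst v - snd u * snd v, fst u * snd v + snd u * fst v).
Definition Cxnorm2 (u : Cx) : R := fst u ^ 2 + snd u ^ 2.

(* Coefficients (a_0, a_1, ...) of the polynomial prod_{i<n} (X - z i). *)
Fixpoint prod_lin_coef (z : nat -> Cx) (n : nat) (k : nat) : Cx :=
  match n with
  | O => match k with O => Cx1 | S _ => Cx0 end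
  | S m => Cxsub (match k with O => Cx0 | S k' => prod_lin_coef z m k' end)
                 (Cxmul (z m) (prod_lin_coef z m k))
  end.

Definition lin_coef (w : Cx) (k : nat) : Cx :=
  match k with O => Cxopp w | 1%nat => Cx1 | _ => Cx0 end.

Definition bw_norm (N : nat) (a : nat -> Cx) : R :=
  sqrt (sum_f_R0 (fun i => / C N i * Cxnorm2 (a i)) N).

Definition R3 : Type := (R * R * R)%type.
Definition px (p : R3) : R := fst (fst p).
Definition py (p : R3) : R := snd (fst p).
Definition pz (p : R3) : R := snd p.
Definition on_sphere (p : R3) : Prop := px p ^ 2 + py p ^ 2 + pz p ^ 2 = 1.
Definition dist3 (p q : R3) : R :=
  sqrt ((px p - px q) ^ 2 + (py p - py q) ^ 2 + (pz p - pz q) ^ 2).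

(* Stereographic projection from the North pole:
   (a,b,c) |-> (a + i b)/(1 - c), defined for c <> 1. *)
Definition stereo (p : R3) : Cx := (px p / (1 - pz p), py p / (1 - pz p)).

(* Riemann integral of f over [a,b] (0 if f is not Riemann integrable;
   the value does not depend on the integrability proof). *)
Definition RInt (f : R -> R) (a b : R) : R :=
  match excluded_middle_informative
          (exists v, exists pr : Riemann_integrable f a b, RiemannInt pr = v) with
  | left H => proj1_sig (constructive_indefinite_description _ H)
  | right _ => 0
  end.

(* Integral against the normalized surface measure sigma on S^2
   (sigma(S^2) = 1), written in spherical coordinates:
   int f dsigma = 1/(4 pi) int_0^{2pi} int_0^pi f(sin t cos s, sin t sin s, cos t) sin t dt ds. *)
Definition sphere_integral (f : R3 -> R) : R :=
  / (4 * PI) *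
  RInt (fun s => RInt (fun t => f (sin t * cos s, sin t * sin s, cos t) * sin t) 0 PI)
       0 (2 * PI).

Fixpoint prodR (n : nat) (f : nat -> R) : R :=
  match n with O => 1 | S m => prodR m f * f m end.

From Pilot Require Import Defs.
From Stdlib Require Import Reals Lra Lia FunctionalExtensionality ClassicalEpsilon Factorial.
From Coquelicot Require Import Coquelicot.
Open Scope R_scope.

(* Put p on the sphere in half-angle coordinates p = (sin t cos s, sin t sin s, cos t). If x is
   on the sphere with stereographic image w, then
     |p - x|^2 (1 + |w|^2) = 4 |cos(t/2) e^(is) - sin(t/2) w|^2,
   so prod_i |p - x_i|^2 is 4^N / prod_i (1 + |z_i|^2) times the squared modulus of the
   homogenised polynomial sum_k a_k cos(t/2)^k sin(t/2)^(N-k) e^(iks). Integrating in s kills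
   the cross terms k <> l, and what remains in t are Beta integrals:
     int_0^pi cos(t/2)^(2k) sin(t/2)^(2(N-k)) sin t dt = 2 / ((N+1) C(N,k)).
   Hence the sphere integral is 4^N ||P||^2 / ((N+1) prod_i (1 + |z_i|^2)), whereas
   prod_i ||X - z_i|| = prod_i sqrt (1 + |z_i|^2). *)

Section ComplexSums.
Local Open Scope C_scope.

Fixpoint Csum (f : nat -> C) (n : nat) : C :=
  match n with O => f O | S m => Csum f m + f (S m) end.

Fixpoint Cprod (n : nat) (f : nat -> C) : C :=
  match n with O => 1 | S m => Cprod m f * f m end.

Lemma Csum_ext (f g : nat -> C) n :
  (forall k, (k <= n)%nat -> f k = g k) -> Csum f n = Csum g n.
Proof.
  induction n as [|n IH]; intros H; simpl; [apply H; lia|].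
  rewrite IH, H; auto; intros; apply H; lia.
Qed.

Lemma Csum_plus (f g : nat -> C) n : Csum (fun k => f k + g k) n = Csum f n + Csum g n.
Proof. induction n as [|n IH]; simpl; [reflexivity|rewrite IH; ring]. Qed.

Lemma Csum_mult_r (f : nat -> C) w n : Csum f n * w = Csum (fun k => f k * w) n.
Proof. induction n as [|n IH]; simpl; [reflexivity|rewrite <- IH; ring]. Qed.

Lemma Csum_shift (f : nat -> C) n : Csum f (S n) = f O + Csum (fun k => f (S k)) n.
Proof.
  induction n as [|n IH]; [reflexivity|].
  change (Csum f (S (S n))) with (Csum f (S n) + f (S (S n))). rewrite IH. simpl. ring.
Qed.

Lemma re_Csum (f : nat -> C) n : Re (Csum f n) = sum_f_R0 (fun k => Re (f k)) n.
Proof. induction n as [|n IH]; simpl; [reflexivity|rewrite <- IH; reflexivity]. Qed.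

Lemma im_Csum (f : nat -> C) n : Im (Csum f n) = sum_f_R0 (fun k => Im (f k)) n.
Proof. induction n as [|n IH]; simpl; [reflexivity|rewrite <- IH; reflexivity]. Qed.

End ComplexSums.

Lemma prod_lin_coef_S z m k :
  (prod_lin_coef z (S m) k : C)
  = ((match k with O => 0%C | S k' => prod_lin_coef z m k' end) - z m * prod_lin_coef z m k)%C.
Proof. reflexivity. Qed.

Lemma prod_lin_coef_gt z n k : (n < k)%nat -> (prod_lin_coef z n k : C) = 0.
Proof.
  revert k; induction n as [|n IH]; intros k Hk; destruct k; try lia; [reflexivity|].
  rewrite prod_lin_coef_S, !IH by lia. ring.
Qed.

Lemma prod_lin_coef_diag z n : (prod_lin_coef z n n : C) = 1.
Proof.
  induction n as [|n IH]; [reflexivity|].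
  rewrite prod_lin_coef_S, IH, prod_lin_coef_gt by lia. ring.
Qed.

Lemma Cprod_homogeneous_expand z (u v : C) n :
  Cprod n (fun i => u - v * z i)%C
  = Csum (fun k => prod_lin_coef z n k * u ^ k * v ^ (n - k))%C n.
Proof.
  induction n as [|n IH]; [cbn [Cprod Csum Cpow Nat.sub]; rewrite prod_lin_coef_diag; ring|].
  simpl Cprod. rewrite IH, Csum_mult_r.
  transitivity (Csum (fun k => (match k with O => 0%C | S k' => prod_lin_coef z n k' end)
                                 * u ^ k * v ^ (S n - k)
                              - z n * prod_lin_coef z n k * u ^ k * v ^ (S n - k))%C (S n)).
  2:{ apply Csum_ext; intros k _. rewrite prod_lin_coef_S. ring. }
  unfold Cminus. rewrite Csum_plus, Csum_shift.
  change (Csum (fun k => - (z n * prod_lin_coef z n k * u ^ k * v ^ (S n - k)))%C (S n))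
    with (Csum (fun k => - (z n * prod_lin_coef z n k * u ^ k * v ^ (S n - k)))%C n
          + - (z n * prod_lin_coef z n (S n) * u ^ S n * v ^ (S n - S n)))%C.
  rewrite prod_lin_coef_gt by lia.
  transitivity (Csum (fun k => prod_lin_coef z n k * u ^ S k * v ^ (S n - S k)) n
      + Csum (fun k => - (z n * prod_lin_coef z n k * u ^ k * v ^ (S n - k))) n)%C; [|ring].
  rewrite <- Csum_plus. apply Csum_ext; intros k Hk.
  replace (S n - k)%nat with (S (n - k)) by lia. simpl (S n - S k)%nat.
  simpl Cpow. ring.
Qed.

Definition polar (c s : R) : C := (c * cos s, c * sin s).

Lemma Cpow_polar (c s : R) k : Cpow (polar c s) k = polar (c ^ k) (INR k * s).
Proof.
  induction k as [|k IH].
  - unfold polar; simpl. rewrite Rmult_0_l, cos_0, sin_0. unfold RtoC. f_equal; ring.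
  - simpl Cpow. rewrite IH, S_INR.
    replace ((INR k + 1) * s) with (s + INR k * s) by ring.
    unfold polar, Cmult; simpl. rewrite cos_plus, sin_plus. f_equal; ring.
Qed.

Lemma Cxnorm2_mult (u v : C) : Cxnorm2 (u * v)%C = Cxnorm2 u * Cxnorm2 v.
Proof. unfold Cxnorm2; simpl; ring. Qed.

Lemma Cxnorm2_Cprod n (f : nat -> C) : Cxnorm2 (Cprod n f) = prodR n (fun i => Cxnorm2 (f i)).
Proof.
  induction n as [|n IH]; simpl; [unfold Cxnorm2; simpl; ring|].
  rewrite Cxnorm2_mult, IH. reflexivity.
Qed.

Lemma sum_f_R0_mult f g n :
  sum_f_R0 f n * sum_f_R0 g n = sum_f_R0 (fun k => sum_f_R0 (fun l => f k * g l) n) n.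
Proof.
  rewrite Rmult_comm, scal_sum. apply sum_eq. intros k _.
  rewrite scal_sum. apply sum_eq. intros; ring.
Qed.

Lemma Cxnorm2_Csum (w : nat -> C) n :
  Cxnorm2 (Csum w n) = sum_f_R0 (fun k => sum_f_R0 (fun l => Re (w k * Cconj (w l))) n) n.
Proof.
  change (Cxnorm2 (Csum w n)) with (Re (Csum w n) ^ 2 + Im (Csum w n) ^ 2).
  rewrite re_Csum, im_Csum, <- !Rsqr_pow2; unfold Rsqr; rewrite !sum_f_R0_mult, <- plus_sum.
  apply sum_eq; intros k _. rewrite <- plus_sum. apply sum_eq; intros l _.
  unfold Re, Im; simpl; ring.
Qed.

Definition cross_term (a : nat -> C) (k l : nat) (s : R) : R :=
  Re (a k * Cconj (a l) * polar 1 ((INR k - INR l) * s))%C.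

Lemma re_homogeneous_terms (a : nat -> C) (c sn s : R) n k l :
  Re (a k * Cpow (polar c s) k * RtoC sn ^ (n - k)
      * Cconj (a l * Cpow (polar c s) l * RtoC sn ^ (n - l)))%C
  = (c ^ k * sn ^ (n - k)) * (c ^ l * sn ^ (n - l)) * cross_term a k l s.
Proof.
  rewrite !Cpow_polar, <- !RtoC_pow. unfold cross_term, polar, Re; simpl.
  replace ((INR k - INR l) * s) with (INR k * s - INR l * s) by ring.
  rewrite cos_minus, sin_minus. ring.
Qed.

Definition sphere_point (t s : R) : R3 := (sin t * cos s, sin t * sin s, cos t).

Lemma on_sphere_sphere_point t s : on_sphere (sphere_point t s).
Proof.
  unfold on_sphere, sphere_point, px, py, pz; simpl.
  pose proof (sin2_cos2 t); pose proof (sin2_cos2 s). unfold Rsqr in *. nra.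
Qed.

Lemma dist3_sq_on_sphere p q : on_sphere p -> on_sphere q ->
  dist3 p q ^ 2 = 2 - 2 * (px p * px q + py p * py q + pz p * pz q).
Proof.
  unfold on_sphere, dist3; intros Hp Hq.
  rewrite pow2_sqrt by (pose proof (pow2_ge_0 (px p - px q)); pose proof (pow2_ge_0 (py p - py q));
                        pose proof (pow2_ge_0 (pz p - pz q)); lra).
  nra.
Qed.

Lemma stereo_inverse x : on_sphere x -> pz x <> 1 ->
  let w := stereo x in
  (1 + Cxnorm2 w) * px x = 2 * fst w /\ (1 + Cxnorm2 w) * py x = 2 * snd w
  /\ (1 + Cxnorm2 w) * pz x = Cxnorm2 w - 1.
Proof.
  destruct x as ((a, b), c). unfold on_sphere, stereo, Cxnorm2, px, py, pz; cbn [fst snd].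
  intros Hs Hc.
  assert (Hd : 1 - c <> 0) by lra.
  assert (Hw : (a / (1 - c)) ^ 2 + (b / (1 - c)) ^ 2 = (1 + c) / (1 - c)).
  { field_simplify_eq; [|exact Hd]. nra. }
  rewrite Hw. repeat split; field; exact Hd.
Qed.

Lemma dist3_sphere_point_sq t s x : on_sphere x -> pz x <> 1 ->
  dist3 (sphere_point t s) x ^ 2
  = 4 * Cxnorm2 (polar (cos (t / 2)) s - RtoC (sin (t / 2)) * stereo x)%C
    / (1 + Cxnorm2 (stereo x)).
Proof.
  intros Hx Hnp.
  rewrite dist3_sq_on_sphere by (apply on_sphere_sphere_point || exact Hx).
  destruct (stereo_inverse x Hx Hnp) as (Ha & Hb & Hc).
  destruct (stereo x) as (u, v). destruct x as ((a, b), c).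
  unfold Cxnorm2, sphere_point, polar, px, py, pz in *; cbn [fst snd] in *.
  replace t with (2 * (t / 2)) at 1 2 3 by field. rewrite sin_2a, cos_2a.
  set (ct := cos (t / 2)) in *. set (st := sin (t / 2)) in *.
  assert (Ht : ct ^ 2 + st ^ 2 = 1) by (unfold ct, st; rewrite <- !Rsqr_pow2, Rplus_comm; apply sin2_cos2).
  assert (Hs : cos s ^ 2 + sin s ^ 2 = 1) by (rewrite <- !Rsqr_pow2, Rplus_comm; apply sin2_cos2).
  assert (HD : 0 < 1 + (u ^ 2 + v ^ 2)) by (pose proof (pow2_ge_0 u); pose proof (pow2_ge_0 v); lra).
  apply (Rmult_eq_reg_r (1 + (u ^ 2 + v ^ 2))); [|lra].
  unfold Rdiv; rewrite (Rmult_assoc _ (/ _)), Rinv_l, Rmult_1_r by lra.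
  transitivity (2 * (1 + (u ^ 2 + v ^ 2)) - 4 * st * ct * cos s * ((1 + (u ^ 2 + v ^ 2)) * a)
                - 4 * st * ct * sin s * ((1 + (u ^ 2 + v ^ 2)) * b)
                - 2 * (ct * ct - st * st) * ((1 + (u ^ 2 + v ^ 2)) * c)); [ring|].
  rewrite Ha, Hb, Hc. cbn [fst snd Cminus Cplus Copp Cmult RtoC].
  assert (E : forall lhs rhs, lhs - rhs = (2 + 2 * (u ^ 2 + v ^ 2)) * (1 - (ct ^ 2 + st ^ 2))
                                        - 4 * ct ^ 2 * (cos s ^ 2 + sin s ^ 2 - 1) -> lhs = rhs)
    by (intros lhs rhs H; rewrite Ht, Hs in H; lra).
  apply E. ring.
Qed.

Lemma RInt_of_is_RInt (f : R -> R) a b v : is_RInt f a b v -> Defs.RInt f a b = v.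
Proof.
  intros H. unfold Defs.RInt.
  destruct excluded_middle_informative as [e|n].
  - destruct (constructive_indefinite_description _ e) as [w [pr Hw]]. simpl.
    rewrite <- Hw, <- RInt_Reals. apply is_RInt_unique. exact H.
  - exfalso. apply n. exists (RiemannInt (ex_RInt_Reals_0 f a b (ex_intro _ v H))).
    eexists. reflexivity.
Qed.

Lemma is_RInt_sum_f_R0 (f : nat -> R -> R) (I : nat -> R) n a b :
  (forall k, (k <= n)%nat -> is_RInt (f k) a b (I k)) ->
  is_RInt (fun x => sum_f_R0 (fun k => f k x) n) a b (sum_f_R0 I n).
Proof.
  induction n as [|n IH]; intros H; simpl; [apply H; lia|].
  apply (is_RInt_plus (V := R_NormedModule)); [apply IH; intros; apply H|apply H]; lia.
Qed.

Lemma is_RInt_mult_l (f : R -> R) a b c I :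
  is_RInt f a b I -> is_RInt (fun x => c * f x) a b (c * I).
Proof. apply (is_RInt_scal (V := R_NormedModule)). Qed.

Lemma is_RInt_ext_R (f g : R -> R) a b l :
  (forall t, f t = g t) -> is_RInt f a b l -> is_RInt g a b l.
Proof. intros H. apply is_RInt_ext. intros t _. apply H. Qed.

Definition half_angle_beta (k m : nat) (t : R) : R :=
  2 * cos (t / 2) ^ (2 * k + 1) * sin (t / 2) ^ (2 * m + 1).

Definition half_angle_beta_value (k m : nat) : R :=
  2 * INR (fact k) * INR (fact m) / INR (fact (k + m + 1)).

Lemma INR_fact_pos n : 0 < INR (fact n).
Proof. apply lt_0_INR, lt_O_fact. Qed.

Lemma is_RInt_half_angle_beta_0 m :
  is_RInt (half_angle_beta 0 m) 0 PI (half_angle_beta_value 0 m).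
Proof.
  set (F := fun t => 4 * sin (t / 2) ^ (2 * m + 2) / INR (2 * m + 2)).
  replace (half_angle_beta_value 0 m) with (F PI - F 0).
  - apply (is_RInt_derive F).
    + intros t _. unfold F, half_angle_beta. auto_derive; [trivial|].
      replace (Init.Nat.pred (m + (m + 0) + 2)) with (2 * m + 1)%nat by lia.
      replace (m + (m + 0) + 2)%nat with (2 * m + 2)%nat by lia.
      simpl (2 * 0 + 1)%nat.
      assert (0 < INR (2 * m + 2)) by (apply lt_0_INR; lia).
      unfold Rdiv. field. lra.
    + intros t _. unfold half_angle_beta.
      apply (@ex_derive_continuous R_AbsRing R_NormedModule). auto_derive. auto.
  - unfold F, half_angle_beta_value.
    replace (0 / 2) with 0 by field. rewrite sin_PI2, sin_0, pow1, pow_i by lia.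
    replace (0 + m + 1)%nat with (S m) by lia. rewrite fact_simpl, mult_INR.
    replace (2 * m + 2)%nat with (2 * S m)%nat by lia. rewrite mult_INR.
    pose proof (INR_fact_pos m). pose proof (lt_0_INR (S m) (Nat.lt_0_succ m)).
    simpl (fact 0). simpl (INR 2). simpl (INR 1). field. lra.
Qed.

Lemma is_RInt_half_angle_beta_S k m :
  is_RInt (half_angle_beta k (S m)) 0 PI (half_angle_beta_value k (S m)) ->
  is_RInt (half_angle_beta (S k) m) 0 PI (half_angle_beta_value (S k) m).
Proof.
  intros Hk.
  set (G := fun t => 2 * cos (t / 2) ^ (2 * k + 2) * sin (t / 2) ^ (2 * m + 2)).
  assert (HG : is_RInt (fun t => (INR m + 1) * half_angle_beta (S k) m t
                                 - (INR k + 1) * half_angle_beta k (S m) t)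
                 0 PI (G PI - G 0)).
  { apply (is_RInt_derive G).
    - intros t _. unfold G, half_angle_beta. auto_derive; [trivial|].
      replace (Init.Nat.pred (k + (k + 0) + 2)) with (2 * k + 1)%nat by lia.
      replace (Init.Nat.pred (m + (m + 0) + 2)) with (2 * m + 1)%nat by lia.
      replace (k + (k + 0) + 2)%nat with (S (2 * k + 1)) by lia.
      replace (m + (m + 0) + 2)%nat with (S (2 * m + 1)) by lia.
      replace (2 * S k + 1)%nat with (S (S (2 * k + 1))) by lia.
      replace (2 * S m + 1)%nat with (S (S (2 * m + 1))) by lia.
      rewrite !S_INR, !plus_INR, !mult_INR. simpl (INR 2). simpl (INR 1).
      simpl pow. unfold Rdiv. field.
    - intros t _. unfold half_angle_beta.
      apply (@ex_derive_continuous R_AbsRing R_NormedModule). auto_derive. auto. }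
  assert (Hm : 0 < INR m + 1) by (pose proof (pos_INR m); lra).
  assert (HB : is_RInt (fun t => / (INR m + 1) * ((INR m + 1) * half_angle_beta (S k) m t
                                                  - (INR k + 1) * half_angle_beta k (S m) t)
                                 + (INR k + 1) / (INR m + 1) * half_angle_beta k (S m) t)
                 0 PI (/ (INR m + 1) * (G PI - G 0)
                       + (INR k + 1) / (INR m + 1) * half_angle_beta_value k (S m)))
    by (apply (is_RInt_plus (V := R_NormedModule)); apply is_RInt_mult_l; assumption).
  replace (half_angle_beta_value (S k) m)
    with (/ (INR m + 1) * (G PI - G 0) + (INR k + 1) / (INR m + 1) * half_angle_beta_value k (S m)).
  - eapply is_RInt_ext_R; [|exact HB]. intros t. cbv beta. field. lra.
  - unfold G, half_angle_beta_value. replace (0 / 2) with 0 by field.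
    rewrite cos_PI2, sin_0, !pow_i by lia.
    replace (S k + m + 1)%nat with (S (k + S m)) by lia.
    replace (k + S m + 1)%nat with (S (k + S m)) by lia.
    rewrite !fact_simpl, !mult_INR, !S_INR.
    pose proof (INR_fact_pos k). pose proof (INR_fact_pos m). pose proof (INR_fact_pos (k + S m)).
    pose proof (pos_INR (k + S m)). field. repeat split; lra.
Qed.

Lemma is_RInt_half_angle_beta k m :
  is_RInt (half_angle_beta k m) 0 PI (half_angle_beta_value k m).
Proof.
  revert m; induction k as [|k IH]; intros m.
  - apply is_RInt_half_angle_beta_0.
  - apply is_RInt_half_angle_beta_S, IH.
Qed.

Lemma is_RInt_cos_mul (w a b : R) : w <> 0 ->
  is_RInt (fun s => cos (w * s)) a b ((sin (w * b) - sin (w * a)) / w).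
Proof.
  intros Hw. replace ((sin (w * b) - sin (w * a)) / w) with (sin (w * b) / w - sin (w * a) / w)
    by (field; exact Hw).
  apply (is_RInt_derive (fun s => sin (w * s) / w)).
  - intros s _. auto_derive; [trivial|]. unfold Rdiv. field. exact Hw.
  - intros s _. apply (@ex_derive_continuous R_AbsRing R_NormedModule). auto_derive. auto.
Qed.

Lemma is_RInt_sin_mul (w a b : R) : w <> 0 ->
  is_RInt (fun s => sin (w * s)) a b ((cos (w * a) - cos (w * b)) / w).
Proof.
  intros Hw. replace ((cos (w * a) - cos (w * b)) / w) with (- cos (w * b) / w - - cos (w * a) / w)
    by (field; exact Hw).
  apply (is_RInt_derive (fun s => - cos (w * s) / w)).
  - intros s _. auto_derive; [trivial|]. unfold Rdiv. field. exact Hw.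
  - intros s _. apply (@ex_derive_continuous R_AbsRing R_NormedModule). auto_derive. auto.
Qed.

Lemma sin_cos_nat_diff_2PI k l :
  sin ((INR k - INR l) * (2 * PI)) = 0 /\ cos ((INR k - INR l) * (2 * PI)) = 1.
Proof.
  pose proof (sin_period 0 k) as Hsk. pose proof (cos_period 0 k) as Hck.
  pose proof (sin_period 0 l) as Hsl. pose proof (cos_period 0 l) as Hcl.
  rewrite Rplus_0_l, ?sin_0, ?cos_0 in *.
  replace ((INR k - INR l) * (2 * PI)) with (2 * INR k * PI - 2 * INR l * PI) by ring.
  rewrite sin_minus, cos_minus, Hsk, Hck, Hsl, Hcl. split; ring.
Qed.

Lemma is_RInt_cross_term (a : nat -> C) k l :
  is_RInt (cross_term a k l) 0 (2 * PI)
    (if Nat.eq_dec k l then 2 * PI * Cxnorm2 (a k) else 0).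
Proof.
  destruct (Nat.eq_dec k l) as [<-|Hkl].
  - replace (2 * PI * Cxnorm2 (a k)) with (scal (2 * PI - 0) (Cxnorm2 (a k)))
      by (change scal with Rmult; simpl; ring).
    eapply is_RInt_ext_R; [|apply (is_RInt_const (V := R_NormedModule))].
    intros s. unfold cross_term, polar, Cxnorm2, Re. rewrite Rminus_diag, Rmult_0_l, cos_0, sin_0.
    simpl. ring.
  - set (w := INR k - INR l).
    assert (Hw : w <> 0) by (intro H; apply Hkl, INR_eq; unfold w in H; lra).
    destruct (sin_cos_nat_diff_2PI k l) as [Hs Hc]. fold w in Hs, Hc.
    set (P := Re (a k * Cconj (a l))%C). set (Q := Im (a k * Cconj (a l))%C).
    assert (H : is_RInt (fun s => P * cos (w * s) + - Q * sin (w * s)) 0 (2 * PI)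
                  (P * ((sin (w * (2 * PI)) - sin (w * 0)) / w)
                   + - Q * ((cos (w * 0) - cos (w * (2 * PI))) / w)))
      by (apply (is_RInt_plus (V := R_NormedModule)); apply is_RInt_mult_l;
          [apply is_RInt_cos_mul|apply is_RInt_sin_mul]; exact Hw).
    rewrite Hs, Hc, Rmult_0_r, sin_0, cos_0, !Rminus_diag in H.
    replace (P * (0 / w) + - Q * (0 / w)) with 0 in H by (field; exact Hw).
    eapply is_RInt_ext_R; [|exact H].
    intros s. unfold cross_term, polar, P, Q, Re, Im. simpl. fold w. ring.
Qed.

Lemma prodR_ext n f g : (forall i, (i < n)%nat -> f i = g i) -> prodR n f = prodR n g.
Proof.
  induction n as [|n IH]; intros H; simpl; [reflexivity|].
  rewrite IH, H; auto; intros; apply H; lia.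
Qed.

Lemma prodR_scal_div n c (g h : nat -> R) :
  prodR n (fun i => c * g i / h i) = c ^ n * prodR n g / prodR n h.
Proof.
  induction n as [|n IH]; simpl; [field|].
  rewrite IH. unfold Rdiv. rewrite !Rinv_mult. ring.
Qed.

Lemma prodR_pos n f : (forall i, 0 < f i) -> 0 < prodR n f.
Proof. intros H; induction n as [|n IH]; simpl; [lra|apply Rmult_lt_0_compat; auto]. Qed.

Lemma prodR_nonneg n f : (forall i, 0 <= f i) -> 0 <= prodR n f.
Proof. intros H; induction n as [|n IH]; simpl; [lra|apply Rmult_le_pos; auto]. Qed.

Lemma prodR_sqrt n f : (forall i, 0 <= f i) -> prodR n (fun i => sqrt (f i)) = sqrt (prodR n f).
Proof.
  intros H; induction n as [|n IH]; simpl; [rewrite sqrt_1; reflexivity|].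
  rewrite IH, sqrt_mult_alt; [reflexivity|apply prodR_nonneg, H].
Qed.

Lemma Cxnorm2_nonneg (u : Cx) : 0 <= Cxnorm2 u.
Proof. unfold Cxnorm2. pose proof (pow2_ge_0 (fst u)). pose proof (pow2_ge_0 (snd u)). lra. Qed.

Definition stereo_weight (z : nat -> Cx) (N : nat) : R := prodR N (fun i => 1 + Cxnorm2 (z i)).

Lemma stereo_weight_pos z N : 0 < stereo_weight z N.
Proof. apply prodR_pos. intros i. pose proof (Cxnorm2_nonneg (z i)). lra. Qed.

Definition half_angle_monomial (N k : nat) (t : R) : R := cos (t / 2) ^ k * sin (t / 2) ^ (N - k).

Definition half_angle_gram (N k l : nat) : R :=
  Coquelicot.RInt.RInt (fun t => half_angle_monomial N k t * half_angle_monomial N l t * sin t) 0 PI.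

Section SphereIntegrand.

Variables (N : nat) (z : nat -> Cx) (x : nat -> R3).
Hypothesis (Hsph : forall i, (i < N)%nat -> on_sphere (x i))
           (Hnp : forall i, (i < N)%nat -> pz (x i) <> 1)
           (Hproj : forall i, (i < N)%nat -> stereo (x i) = z i).

Lemma prod_dist3_sphere_point_sq t s :
  prodR N (fun i => dist3 (sphere_point t s) (x i) ^ 2)
  = 4 ^ N * Cxnorm2 (Csum (fun k => prod_lin_coef z N k * Cpow (polar (cos (t / 2)) s) k
                                    * RtoC (sin (t / 2)) ^ (N - k))%C N)
    / stereo_weight z N.
Proof.
  rewrite (prodR_ext N _ (fun i => 4 * Cxnorm2 (polar (cos (t / 2)) s - RtoC (sin (t / 2)) * z i)%C
                                   / (1 + Cxnorm2 (z i)))).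
  - rewrite prodR_scal_div, <- Cxnorm2_Cprod, Cprod_homogeneous_expand. reflexivity.
  - intros i Hi. rewrite dist3_sphere_point_sq, Hproj by auto. reflexivity.
Qed.

Lemma sphere_integrand_expand t s :
  prodR N (fun i => dist3 (sphere_point t s) (x i) ^ 2) * sin t
  = sum_f_R0 (fun k => sum_f_R0 (fun l =>
      (4 ^ N / stereo_weight z N * cross_term (prod_lin_coef z N) k l s)
      * (half_angle_monomial N k t * half_angle_monomial N l t * sin t)) N) N.
Proof.
  rewrite prod_dist3_sphere_point_sq, Cxnorm2_Csum.
  set (c := 4 ^ N / stereo_weight z N).
  transitivity (c * sin t * sum_f_R0 (fun k => sum_f_R0 (fun l =>
    Re (prod_lin_coef z N k * Cpow (polar (cos (t / 2)) s) k * RtoC (sin (t / 2)) ^ (N - k)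
        * Cconj (prod_lin_coef z N l * Cpow (polar (cos (t / 2)) s) l
                 * RtoC (sin (t / 2)) ^ (N - l)))%C) N) N); [unfold c, Rdiv; ring|].
  rewrite scal_sum. apply sum_eq; intros k _.
  rewrite Rmult_comm, scal_sum. apply sum_eq; intros l _.
  rewrite re_homogeneous_terms. unfold half_angle_monomial. ring.
Qed.

(* The point is spelled out rather than written [sphere_point t s] so that the lemma rewrites
   under the binder of [sphere_integral]. *)
Lemma sphere_inner_integral s :
  Defs.RInt (fun t => prodR N (fun i => dist3 (sin t * cos s, sin t * sin s, cos t) (x i) ^ 2)
                      * sin t) 0 PI
  = sum_f_R0 (fun k => sum_f_R0 (fun l =>
      (4 ^ N / stereo_weight z N * cross_term (prod_lin_coef z N) k l s)
      * half_angle_gram N k l) N) N.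
Proof.
  apply RInt_of_is_RInt.
  eapply is_RInt_ext; [intros t _; symmetry; apply sphere_integrand_expand|].
  apply is_RInt_sum_f_R0; intros k _. apply is_RInt_sum_f_R0; intros l _.
  apply is_RInt_mult_l, (RInt_correct (V := R_CompleteNormedModule)), ex_RInt_continuous.
  intros t _. unfold half_angle_monomial.
  apply (@ex_derive_continuous R_AbsRing R_NormedModule). auto_derive. auto.
Qed.

End SphereIntegrand.

Lemma sum_f_R0_delta (g : nat -> R) c k n : (k <= n)%nat ->
  sum_f_R0 (fun l => g l * (if Nat.eq_dec k l then c else 0)) n = g k * c.
Proof.
  induction n as [|n IH]; intros Hk; simpl.
  - assert (k = 0%nat) by lia. subst. destruct (Nat.eq_dec 0 0); [reflexivity|congruence].
  - destruct (Nat.eq_dec k (S n)) as [->|Hne].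
    + rewrite (sum_eq _ (fun _ => 0)), sum_cte; [ring|].
      intros i Hi. destruct (Nat.eq_dec (S n) i); [lia|ring].
    + rewrite IH by lia. ring.
Qed.

Lemma binomial_pos N k : 0 < Binomial.C N k.
Proof.
  unfold Binomial.C.
  pose proof (INR_fact_pos N). pose proof (INR_fact_pos k). pose proof (INR_fact_pos (N - k)).
  apply Rdiv_lt_0_compat, Rmult_lt_0_compat; assumption.
Qed.

Lemma half_angle_gram_diag N k : (k <= N)%nat ->
  half_angle_gram N k k = 2 / (INR N + 1) / Binomial.C N k.
Proof.
  intros Hk. unfold half_angle_gram.
  replace (2 / (INR N + 1) / Binomial.C N k) with (half_angle_beta_value k (N - k)).
  - apply is_RInt_unique. eapply is_RInt_ext_R; [|apply is_RInt_half_angle_beta].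
    intros t. unfold half_angle_beta, half_angle_monomial.
    replace (sin t) with (2 * sin (t / 2) * cos (t / 2)) by (rewrite <- sin_2a; f_equal; field).
    replace (2 * k + 1)%nat with (S (k + k)) by lia.
    replace (2 * (N - k) + 1)%nat with (S ((N - k) + (N - k))) by lia.
    simpl pow. rewrite !pow_add. ring.
  - unfold half_angle_beta_value, Binomial.C. replace (k + (N - k) + 1)%nat with (S N) by lia.
    rewrite fact_simpl, mult_INR, S_INR.
    pose proof (INR_fact_pos N). pose proof (INR_fact_pos k). pose proof (INR_fact_pos (N - k)).
    pose proof (pos_INR N). field. repeat split; lra.
Qed.

Lemma is_RInt_sphere_outer (a : nat -> C) (c : R) N :
  is_RInt (fun s => sum_f_R0 (fun k => sum_f_R0 (fun l =>
             (c * cross_term a k l s) * half_angle_gram N k l) N) N) 0 (2 * PI)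
    (sum_f_R0 (fun k => c * half_angle_gram N k k * (2 * PI * Cxnorm2 (a k))) N).
Proof.
  replace (sum_f_R0 (fun k => c * half_angle_gram N k k * (2 * PI * Cxnorm2 (a k))) N)
    with (sum_f_R0 (fun k => sum_f_R0 (fun l => c * half_angle_gram N k l
            * (if Nat.eq_dec k l then 2 * PI * Cxnorm2 (a k) else 0)) N) N).
  - apply is_RInt_sum_f_R0; intros k _. apply is_RInt_sum_f_R0; intros l _.
    apply (is_RInt_ext_R (fun s => c * half_angle_gram N k l * cross_term a k l s));
      [intros s; ring|apply is_RInt_mult_l, is_RInt_cross_term].
  - apply sum_eq; intros k Hk. apply (sum_f_R0_delta (fun l => c * half_angle_gram N k l)), Hk.
Qed.

Lemma bw_norm_sq N (a : nat -> Cx) :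
  bw_norm N a ^ 2 = sum_f_R0 (fun i => / Binomial.C N i * Cxnorm2 (a i)) N.
Proof.
  apply pow2_sqrt, cond_pos_sum. intros i.
  apply Rmult_le_pos; [left; apply Rinv_0_lt_compat, binomial_pos|apply Cxnorm2_nonneg].
Qed.

Lemma sphere_integral_prod_dist3_sq N z x
  (Hsph : forall i, (i < N)%nat -> on_sphere (x i))
  (Hnp : forall i, (i < N)%nat -> pz (x i) <> 1)
  (Hproj : forall i, (i < N)%nat -> stereo (x i) = z i) :
  sphere_integral (fun p => prodR N (fun i => dist3 p (x i) ^ 2))
  = 4 ^ N / (INR N + 1) * bw_norm N (prod_lin_coef z N) ^ 2 / stereo_weight z N.
Proof.
  unfold sphere_integral.
  rewrite (functional_extensionality _ _ (sphere_inner_integral N z x Hsph Hnp Hproj)).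
  rewrite (RInt_of_is_RInt _ _ _ _ (is_RInt_sphere_outer _ _ N)), bw_norm_sq.
  pose proof (stereo_weight_pos z N). pose proof (pos_INR N). pose proof PI_RGT_0.
  transitivity (4 ^ N / (INR N + 1) / stereo_weight z N
                * sum_f_R0 (fun k => / Binomial.C N k * Cxnorm2 (prod_lin_coef z N k)) N);
    [|field; lra].
  rewrite !scal_sum. apply sum_eq; intros k Hk.
  rewrite half_angle_gram_diag by exact Hk.
  pose proof (binomial_pos N k). field. repeat split; lra.
Qed.

Lemma bw_norm_lin_coef w : bw_norm 1 (lin_coef w) = sqrt (1 + Cxnorm2 w).
Proof.
  unfold bw_norm, lin_coef. simpl sum_f_R0. f_equal.
  unfold Binomial.C, Cxnorm2, Cxopp, Cx1. simpl. field.
Qed.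

Lemma bw_norm_prod_lin_coef_pos z N : 0 < bw_norm N (prod_lin_coef z N).
Proof.
  apply sqrt_lt_R0. destruct N as [|N].
  - simpl. unfold Binomial.C, Cxnorm2, Cx1; simpl. lra.
  - rewrite tech5, prod_lin_coef_diag.
    apply Rplus_le_lt_0_compat.
    + apply cond_pos_sum; intros i.
      apply Rmult_le_pos; [left; apply Rinv_0_lt_compat, binomial_pos|apply Cxnorm2_nonneg].
    + apply Rmult_lt_0_compat; [apply Rinv_0_lt_compat, binomial_pos|].
      unfold Cxnorm2; simpl; lra.
Qed.

Theorem theorem4p2 (N : nat) (z : nat -> Cx) (x : nat -> R3)
  (Hsph : forall i, (i < N)%nat -> on_sphere (x i))
  (Hnp : forall i, (i < N)%nat -> pz (x i) <> 1)
  (Hproj : forall i, (i < N)%nat -> stereo (x i) = z i) :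
  prodR N (fun i => bw_norm 1 (lin_coef (z i))) / bw_norm N (prod_lin_coef z N)
  = 2 ^ N / sqrt (INR N + 1) *
    / sqrt (sphere_integral (fun p => prodR N (fun i => dist3 p (x i) ^ 2))).
Proof.
  rewrite (sphere_integral_prod_dist3_sq N z x Hsph Hnp Hproj).
  rewrite (prodR_ext N _ (fun i => sqrt (1 + Cxnorm2 (z i)))) by (intros; apply bw_norm_lin_coef).
  rewrite prodR_sqrt by (intros i; pose proof (Cxnorm2_nonneg (z i)); lra).
  fold (stereo_weight z N).
  set (B := bw_norm N (prod_lin_coef z N)). set (W := stereo_weight z N).
  assert (HB : 0 < B) by apply bw_norm_prod_lin_coef_pos.
  assert (HW : 0 < W) by apply stereo_weight_pos.
  assert (HN : 0 < INR N + 1) by (pose proof (pos_INR N); lra).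
  assert (HsW : 0 < sqrt W) by (apply sqrt_lt_R0; lra).
  assert (HsN : 0 < sqrt (INR N + 1)) by (apply sqrt_lt_R0; lra).
  assert (H2 : 0 < 2 ^ N) by (apply pow_lt; lra).
  replace (4 ^ N / (INR N + 1) * B ^ 2 / W) with ((2 ^ N * B / (sqrt (INR N + 1) * sqrt W)) ^ 2).
  - rewrite sqrt_pow2 by (apply Rlt_le, Rdiv_lt_0_compat; nra).
    field. lra.
  - replace (4 ^ N) with ((2 ^ N) ^ 2) by (rewrite <- pow_mult, Nat.mul_comm, pow_mult; f_equal; ring).
    unfold Rdiv. rewrite !Rpow_mult_distr, pow_inv, Rpow_mult_distr, !pow2_sqrt.
    + field. lra.
    + lra.
    + lra.
Qed.
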